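(* Let $q$ be a prime power, let $R$ be a finite local ring containing the field $\mathbb{F}_q$ as a subring, let $R^*$ be its set of units, $\delta=\dim_{\mathbb{F}_q}(R\setminus R^* )$, and let $F=R/(R\setminus R^* )$ (a field containing $\mathbb{F}_q$ via the quotient map). If the chain geometry $\Sigma(\mathbb{F}_q,F)$ contains a blocking set of size $x$, then $\Sigma(\mathbb{F}_q,R)$ contains a blocking set of size $xq^{\delta}$.
   Context: All rings are associative with unit element $1\neq 0$, and subrings share the unit. For a ring $S$, $S^2$ is regarded as a left $S$-module and the projective line $\mathbb{P}(S)$ is the set of all submodules of $S^2$ of the form $S(a,b)$ where $(a\ b)$ is the first row of some invertible $2\times 2$ matrix over $S$. For a field $K\subseteq S$ (as a subring), $\mathbb{P}(K)$ is embedded in $\mathbb{P}(S)$ via $K(a,b)\mapsto S(a,b)$. The chain geometry $\Sigma(K,S)$ has point set $\mathbb{P}(S)$ and its blocks, called chains, are the sets $\mathbb{P}(K)^g$ with $g\in\mathrm{GL}_2(S)$. A blocking set is a set $B$ of points such that every chain contains at least one element of $B$. *)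

From HB Require Import structures.
From mathcomp Require Import all_boot all_order all_algebra.
Set Implicit Arguments. Unset Strict Implicit. Unset Printing Implicit Defensive.
Import GRing.Theory.
Local Open Scope ring_scope.

Definition invertible2 (S : finUnitRingType) (g : 'M[S]_2) : Prop :=
  exists h : 'M[S]_2, g *m h = 1%:M /\ h *m g = 1%:M.

Definition admissible (S : finUnitRingType) (a b : S) : Prop :=
  exists M : 'M[S]_2, invertible2 M /\ M ord0 ord0 = a /\ M ord0 ord_max = b.

Definition cyc (S : finUnitRingType) (a b : S) : {set S * S} :=
  [set (r * a, r * b) | r : S].

Definition proj_point (S : finUnitRingType) (P : {set S * S}) : Prop :=
  exists a b : S, admissible a b /\ P = cyc a b.

(* chains of Sigma(K,S), K embedded in S via iota: the sets P(K)^g, g in GL_2(S);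
   the point S(a,b) is mapped by g to S((a b) g) *)
Definition chain (K S : finUnitRingType) (iota : K -> S) (C : {set {set S * S}}) : Prop :=
  exists g : 'M[S]_2, invertible2 g /\
    forall P : {set S * S}, P \in C <->
      exists a b : K, admissible a b /\
        P = cyc (iota a * g ord0 ord0 + iota b * g ord_max ord0)
                (iota a * g ord0 ord_max + iota b * g ord_max ord_max).

Definition blocking_set (K S : finUnitRingType) (iota : K -> S) (B : {set {set S * S}}) : Prop :=
  (forall P, P \in B -> proj_point P) /\
  (forall C, chain iota C -> exists P, P \in C /\ P \in B).

Definition local_ring (R : finUnitRingType) : Prop :=
  (forall x y : R, x \isn't a GRing.unit -> y \isn't a GRing.unit -> (x + y) \isn't a GRing.unit) /\
  (forall r x : R, x \isn't a GRing.unit ->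
      (r * x) \isn't a GRing.unit /\ (x * r) \isn't a GRing.unit).

Definition Kdim (K R : finUnitRingType) (iota : K -> R) (J : R -> Prop) (d : nat) : Prop :=
  exists b : 'I_d -> R, (forall i, J (b i)) /\
    forall r : R, J r <-> exists! c : {ffun 'I_d -> K}, r = \sum_(i < d) iota (c i) * b i.

From HB Require Import structures.
From mathcomp Require Import all_boot all_order all_algebra.
Import GRing.Theory.
Local Open Scope ring_scope.
Set Implicit Arguments. Unset Strict Implicit.

(* Every point of P(F) is F(1,c) or F(0,1).  Lift F(1,c) with a nonunit j to
   R(1, c' + j), where c' is a fixed preimage of c, and F(0,1) to R(j, 1).
   The lifted points of B x (R \ R^* ) are pairwise distinct, since reducing a
   lifted point modulo R \ R^* gives back its origin, so there are
   x * #|R \ R^*| = x * q^delta of them.  A chain of Sigma(F_q,R) given by g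
   reduces to the chain of Sigma(F_q,F) given by the reduction of g; a point
   F(pi u, pi v) of B on the reduced chain comes from the point R(u,v) of the
   original chain, and R(u,v) is one of the lifts of F(pi u, pi v). *)

Section CyclicSubmodule.
Variable S : finUnitRingType.
Implicit Types a b u v : S.

Lemma cycP a b (x y : S) : (x, y) \in cyc a b <-> exists r, x = r * a /\ y = r * b.
Proof.
split; first by case/imsetP => r _ [-> ->]; exists r.
by case=> r [-> ->]; apply/imsetP; exists r.
Qed.

Lemma cyc_gen a b : (a, b) \in cyc a b.
Proof. by apply/cycP; exists 1; rewrite !mul1r. Qed.

Lemma cyc_scale (w : S) a b : w \is a GRing.unit -> cyc (w * a) (w * b) = cyc a b.
Proof.
move=> Uw; apply/setP => -[x y]; apply/idP/idP => /cycP [r [-> ->]]; apply/cycP.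
  by exists (r * w); rewrite !mulrA.
by exists (r * w^-1); rewrite !mulrA mulrVK.
Qed.

Lemma cyc_unitl u v : u \is a GRing.unit -> cyc u v = cyc 1 (u^-1 * v).
Proof. by move=> Uu; rewrite -(@cyc_scale u^-1) ?mulVr ?unitrV. Qed.

Lemma cyc_unitr u v : v \is a GRing.unit -> cyc u v = cyc (v^-1 * u) 1.
Proof. by move=> Uv; rewrite -(@cyc_scale v^-1 u) ?mulVr ?unitrV. Qed.

Lemma cyc1l_inj : injective (@cyc S 1).
Proof.
move=> t t' E; have := cyc_gen 1 t; rewrite E => /cycP [r [+ ->]].
by rewrite mulr1 => <-; rewrite mul1r.
Qed.

Lemma cyc1r_inj : injective (fun t : S => cyc t 1).
Proof.
move=> t t' /= E; have := cyc_gen t 1; rewrite E => /cycP [r [-> +]].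
by rewrite mulr1 => <-; rewrite mul1r.
Qed.

End CyclicSubmodule.

Section ProjectiveLine.
Variable S : finUnitRingType.

Definition mx2 (a b c d : S) : 'M[S]_2 :=
  \matrix_(i < 2, j < 2) nth 0 (nth [::] [:: [:: a; b]; [:: c; d]] i) j.

Lemma mx2_mul a b c d a' b' c' d' :
  mx2 a b c d *m mx2 a' b' c' d' =
  mx2 (a * a' + b * c') (a * b' + b * d') (c * a' + d * c') (c * b' + d * d').
Proof.
apply/matrixP => i j; rewrite !mxE !big_ord_recl big_ord0 !mxE /= addr0.
by case: i => [[|[|i]] ?] //; case: j => [[|[|j]] ?].
Qed.

Lemma mx2_1 : mx2 1 0 0 1 = 1%:M.
Proof.
apply/matrixP => i j; rewrite !mxE.
by case: i => [[|[|i]] ?] //; case: j => [[|[|j]] ?].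
Qed.

Lemma admissible1l (t : S) : admissible 1 t.
Proof.
exists (mx2 1 t 0 1); split; last by rewrite !mxE.
exists (mx2 1 (- t) 0 1); rewrite !mx2_mul -mx2_1.
by rewrite !(mul1r, mulr1, mul0r, mulr0, add0r, addr0, subrr, addNr).
Qed.

Lemma admissible1r (t : S) : admissible t 1.
Proof.
exists (mx2 t 1 1 0); split; last by rewrite !mxE.
exists (mx2 0 1 1 (- t)); rewrite !mx2_mul -mx2_1.
by rewrite !(mul1r, mulr1, mul0r, mulr0, add0r, addr0, subrr, addNr).
Qed.

Lemma admissible_neq0 (a b : S) : admissible a b -> a != 0 \/ b != 0.
Proof.
case=> M [[h [/matrixP /(_ ord0 ord0) Mh _]] [Ma Mb]].
move: Mh; rewrite !mxE !big_ord_recl big_ord0 /= addr0.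
have -> : lift ord0 (@ord0 0) = ord_max by apply/val_inj.
rewrite Ma Mb; case: (eqVneq a 0) => [->|]; last by left.
case: (eqVneq b 0) => [->|]; last by right.
by rewrite !mul0r addr0 => /eqP; rewrite eq_sym oner_eq0.
Qed.

Lemma cyc00_not_point : ~ proj_point (cyc 0 0 : {set S * S}).
Proof.
case=> a [b [ab E]]; have := cyc_gen a b; rewrite -E => /cycP [r [a0 b0]].
by case: (admissible_neq0 ab); rewrite ?a0 ?b0 mulr0 eqxx.
Qed.

Definition admissibleb (a b : S) : bool :=
  [exists M : 'M[S]_2, [exists h : 'M[S]_2,
     [&& M *m h == 1%:M, h *m M == 1%:M, M ord0 ord0 == a & M ord0 ord_max == b]]].

Lemma admissibleP (a b : S) : reflect (admissible a b) (admissibleb a b).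
Proof.
apply: (iffP existsP) => [[M /existsP [h /and4P [/eqP ? /eqP ? /eqP ? /eqP ?]]]|].
  by exists M; split => //; exists h.
case=> M [[h [? ?]] [? ?]]; exists M; apply/existsP; exists h.
by apply/and4P; split; apply/eqP.
Qed.

End ProjectiveLine.

Lemma invertible2_map (S T : finUnitRingType) (f : {rmorphism S -> T}) (g : 'M[S]_2) :
  invertible2 g -> invertible2 (map_mx f g).
Proof. by case=> h [gh hg]; exists (map_mx f h); rewrite -!map_mxM gh hg map_mx1. Qed.

Section Chains.
Variables (K S : finUnitRingType) (iota : K -> S).

Definition chain_of (g : 'M[S]_2) : {set {set S * S}} :=
  [set cyc (iota ab.1 * g ord0 ord0 + iota ab.2 * g ord_max ord0)
           (iota ab.1 * g ord0 ord_max + iota ab.2 * g ord_max ord_max)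
  | ab in [set ab : K * K | admissibleb ab.1 ab.2]].

Lemma mem_chain_of (g : 'M[S]_2) (P : {set S * S}) :
  P \in chain_of g <->
  exists a b : K, admissible a b /\
    P = cyc (iota a * g ord0 ord0 + iota b * g ord_max ord0)
            (iota a * g ord0 ord_max + iota b * g ord_max ord_max).
Proof.
split; first by case/imsetP => -[a b] /[!inE] /admissibleP ab ->; exists a, b.
by case=> a [b [ab ->]]; apply/imsetP; exists (a, b); rewrite // inE; apply/admissibleP.
Qed.

Lemma chain_of_chain (g : 'M[S]_2) : invertible2 g -> chain iota (chain_of g).
Proof. by move=> Ig; exists g; split => // P; apply: mem_chain_of. Qed.

End Chains.

Lemma card_Kdim (K R : finUnitRingType) (iota : K -> R) (J : pred R) (d : nat) :
  J 0 -> (forall x y, J x -> J y -> J (x + y)) -> (forall k x, J x -> J (iota k * x)) ->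
  Kdim iota (fun r => J r) d -> #|[set r | J r]| = (#|K| ^ d)%N.
Proof.
move=> J0 JD JZ [e [Je Jcoord]].
pose comb (c : {ffun 'I_d -> K}) := \sum_(i < d) iota (c i) * e i.
have Jcomb c : J (comb c) by apply: (big_ind J) => // i _; apply: JZ.
have -> : [set r | J r] = comb @: setT.
  apply/setP => r; rewrite inE; apply/idP/imsetP; last by case=> c _ ->.
  by case/Jcoord => c [-> _]; exists c.
rewrite card_in_imset ?cardsT ?card_ffun ?card_ord // => c c' _ _ E.
have [c0 [_ uniq_c0]] := proj1 (Jcoord _) (Jcomb c).
by rewrite -(uniq_c0 c) // -(uniq_c0 c') // E.
Qed.

Section FieldPoints.
Variable F : finFieldType.
Implicit Type Q : {set F * F}.

Lemma proj_point_affine Q (c : F) : proj_point Q -> (1, c) \in Q -> Q = cyc 1 c.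
Proof.
case=> a [b [_ ->]] /cycP [r [ra ->]].
have Ur : r \is a GRing.unit.
  by rewrite unitfE; apply: contra_eq_neq ra => ->; rewrite mul0r oner_neq0.
by rewrite -(cyc_scale a b Ur) -ra.
Qed.

Lemma proj_point_infinity Q : proj_point Q -> (forall c : F, (1, c) \notin Q) -> Q = cyc 0 1.
Proof.
case=> a [b [ab ->]] Qn1; case: (eqVneq a 0) => [a0|a_neq0].
  have Ub : b \is a GRing.unit.
    by rewrite unitfE; case: (admissible_neq0 ab); rewrite ?a0 ?eqxx.
  by rewrite (cyc_unitr _ Ub) a0 mulr0.
by have := cyc_gen 1 (a^-1 * b); rewrite -cyc_unitl ?unitfE // (negbTE (Qn1 _)).
Qed.

End FieldPoints.

Section Lifting.
Variables (R : finUnitRingType) (F : finFieldType) (pi : {rmorphism R -> F}).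
Hypothesis pi_surj : forall y : F, exists r : R, pi r = y.
Hypothesis pi_unit : forall w : R, pi w != 0 -> w \is a GRing.unit.

Definition lift_coord (c : F) : R := odflt 0 [pick t | pi t == c].

Lemma lift_coordK : cancel lift_coord pi.
Proof.
move=> c; rewrite /lift_coord; case: pickP => [t /eqP //|no_preim].
by have [r rc] := pi_surj c; have := no_preim r; rewrite rc eqxx.
Qed.

Definition reduce_point (P : {set R * R}) : {set F * F} :=
  [set (pi xy.1, pi xy.2) | xy in P].

Lemma reduce_cyc (a b : R) : reduce_point (cyc a b) = cyc (pi a) (pi b).
Proof.
apply/setP => -[x y]; apply/idP/idP.
  case/imsetP => _ /imsetP [r _ ->] [-> ->]; apply/cycP.
  by exists (pi r); rewrite !rmorphM.
case/cycP => s [-> ->]; apply/imsetP; exists (lift_coord s * a, lift_coord s * b).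
  by apply/cycP; exists (lift_coord s).
by rewrite /= !rmorphM lift_coordK.
Qed.

Definition lift_point (Q : {set F * F}) (j : R) : {set R * R} :=
  if [pick c | (1, c) \in Q] is Some c then cyc 1 (lift_coord c + j) else cyc j 1.

Lemma lift_point_proj Q j : proj_point (lift_point Q j).
Proof.
rewrite /lift_point; case: pickP => [c _|_].
  by exists 1, (lift_coord c + j); split => //; apply: admissible1l.
by exists j, 1; split => //; apply: admissible1r.
Qed.

Lemma lift_point_affine Q c j :
  proj_point Q -> (1, c) \in Q -> lift_point Q j = cyc 1 (lift_coord c + j).
Proof.
move=> Qpt Q1c; rewrite /lift_point; case: pickP => [c' Q1c'|/(_ c)]; last by rewrite Q1c.
move: Q1c; rewrite (proj_point_affine Qpt Q1c') => /cycP [r [+ ->]].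
by rewrite mulr1 => <-; rewrite mul1r.
Qed.

Lemma lift_pointK Q j : proj_point Q -> pi j = 0 -> reduce_point (lift_point Q j) = Q.
Proof.
move=> Qpt j0; rewrite /lift_point; case: pickP => [c Q1c|Qn1].
  by rewrite reduce_cyc rmorph1 rmorphD lift_coordK j0 addr0 (proj_point_affine Qpt Q1c).
by rewrite reduce_cyc rmorph1 j0 (proj_point_infinity Qpt) // => c; rewrite Qn1.
Qed.

Lemma lift_point_inj Q Q' j j' : proj_point Q -> proj_point Q' -> pi j = 0 -> pi j' = 0 ->
  lift_point Q j = lift_point Q' j' -> (Q, j) = (Q', j').
Proof.
move=> Qpt Q'pt j0 j'0 E.
have QQ' : Q = Q' by rewrite -(lift_pointK Qpt j0) -(lift_pointK Q'pt j'0) E.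
move: E; rewrite -QQ' /lift_point; by case: pickP => [c _ /cyc1l_inj /addrI ->|_ /cyc1r_inj ->].
Qed.

Lemma lift_point_onto Q (u v : R) : proj_point Q -> Q = cyc (pi u) (pi v) ->
  exists2 j, pi j = 0 & lift_point Q j = cyc u v.
Proof.
move=> Qpt Quv; case: (eqVneq (pi u) 0) => [u0|u_neq0].
  have Uv : v \is a GRing.unit.
    apply: pi_unit; apply: contraPneq Qpt => v0.
    by rewrite Quv u0 v0; apply: cyc00_not_point.
  exists (v^-1 * u); first by rewrite rmorphM u0 mulr0.
  rewrite /lift_point (cyc_unitr _ Uv); case: pickP => // c.
  by rewrite Quv u0 => /cycP [r [/eqP]]; rewrite mulr0 oner_eq0.
have Uu := pi_unit u_neq0.
have Q1c : (1, pi (u^-1 * v)) \in Q.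
  by rewrite Quv; apply/cycP; exists (pi u)^-1; rewrite mulVf // rmorphM rmorphV.
exists (u^-1 * v - lift_coord (pi (u^-1 * v))).
  by rewrite rmorphB lift_coordK subrr.
by rewrite (lift_point_affine _ Qpt Q1c) addrC subrK (cyc_unitl _ Uu).
Qed.

End Lifting.

Theorem mainTheorem5
  (q : nat) (Fq : finFieldType) (hq : #|Fq| = q)
  (R : finUnitRingType) (iota : {rmorphism Fq -> R})
  (hloc : local_ring R)
  (delta : nat) (hdelta : Kdim iota (fun r : R => r \isn't a GRing.unit) delta)
  (F : finFieldType) (pi : {rmorphism R -> F})
  (hpi_surj : forall y : F, exists r : R, pi r = y)
  (hpi_ker : forall r : R, pi r = 0 <-> r \isn't a GRing.unit)
  (x : nat) :
  (exists B : {set {set F * F}}, blocking_set (fun a : Fq => pi (iota a)) B /\ #|B| = x) ->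
  exists B : {set {set R * R}}, blocking_set iota B /\ #|B| = (x * q ^ delta)%N.
Proof.
case=> B [[B_pts B_blocks] <-].
have pi_unit w : pi w != 0 -> w \is a GRing.unit by apply: contraR => /hpi_ker ->.
pose J := [set r : R | r \isn't a GRing.unit].
have J0 j : j \in J -> pi j = 0 by rewrite inE => /hpi_ker.
have cardJ : #|J| = (q ^ delta)%N.
  rewrite -hq (card_Kdim _ _ _ hdelta) ?unitr0 // => [x1 x2|k y Jy].
    exact: hloc.1.
  exact: (hloc.2 _ _ Jy).1.
exists (uncurry (lift_point pi) @: setX B J); split; last first.
  rewrite card_in_imset ?cardsX ?cardJ // => -[Q j] [Q' j'] /setXP [BQ Jj] /setXP [BQ' Jj'].
  by apply: (lift_point_inj hpi_surj); [apply: B_pts|apply: B_pts|apply: J0|apply: J0].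
split=> [P /imsetP [[Q j] _ ->]|C [g [Ig Cg]]]; first exact: lift_point_proj.
have [Q [/mem_chain_of [a [b [ab Qab]]] BQ]] :=
  B_blocks _ (chain_of_chain (fun a : Fq => pi (iota a)) (invertible2_map pi Ig)).
set u := iota a * g ord0 ord0 + iota b * g ord_max ord0.
set v := iota a * g ord0 ord_max + iota b * g ord_max ord_max.
have Quv : Q = cyc (pi u) (pi v) by rewrite Qab /u /v !rmorphD !rmorphM !mxE.
have [j j0 Qj] := lift_point_onto hpi_surj pi_unit (B_pts _ BQ) Quv.
exists (cyc u v); split; first by apply/Cg; exists a, b.
by apply/imsetP; exists (Q, j); rewrite ?inE ?BQ //=; apply/hpi_ker.
Qed.
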